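(* Let $r\ge 2$ and let $S$ be a general position set of the glued binary tree $GT(r)$. If $|S\cap V_r^{(1)}|\ge 2$, then to each vertex $v\in S\cap V_r^{(1)}$ one can assign a pair of quasi-leaves belonging to $T_v$ and not belonging to $S$, in such a way that the pairs assigned to distinct vertices of $S\cap V_r^{(1)}$ are pairwise disjoint.
   Context: A perfect binary tree of depth $r\ge1$ is a rooted tree in which every non-leaf vertex has exactly $2$ children and all leaves have depth $r$. The glued binary tree $GT(r)$ is obtained from two copies $T_r^{(1)}$ and $T_r^{(2)}$ of the perfect binary tree of depth $r$ by pairwise identifying their leaves (via a fixed isomorphism of the copies). The identified vertices are the quasi-leaves; $L(GT(r))=V(T_r^{(1)})\cap V(T_r^{(2)})$, and $V_r^{(i)}=V(T_r^{(i)})\setminus L(GT(r))$ for $i\in\{1,2\}$. For $u\in V_r^{(1)}$, $T_u$ denotes the subtree of $T_r^{(1)}$ rooted at $u$ consisting of $u$ and all its descendants (its leaves being the quasi-leaves below $u$). For $S\subseteq V(G)$, two vertices $u,v$ are $S$-positionable if every shortest $u,v$-path $P$ satisfies $V(P)\cap S\subseteq\{u,v\}$; $S$ is a general position set if every two vertices of $S$ are $S$-positionable. *)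

From mathcomp Require Import all_boot.
Set Implicit Arguments. Unset Strict Implicit. Unset Printing Implicit Defensive.

(* Perfect binary tree of depth r in heap numbering: nodes 1 .. 2^(r+1)-1,
   node k has children 2k and 2k+1, the leaves are 2^r .. 2^(r+1)-1.
   Vertices of GT(r):
   - inl (b, k) : non-leaf vertex with heap index k+1 of copy T_r^(1) (b = true)
                  or of copy T_r^(2) (b = false)   (k < 2^r - 1)
   - inr j      : quasi-leaf with heap index 2^r + j (shared by both copies)
   The leaves of the two copies are identified via the identity of heap
   indices (the fixed isomorphism of the copies). *)
Definition GTV (r : nat) : finType := ((bool * 'I_((2 ^ r).-1)) + 'I_(2 ^ r))%type.

Definition hidx (r : nat) (v : GTV r) : nat :=
  match v with inl (_, k) => (val k).+1 | inr j => 2 ^ r + val j end.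

Definition in_copy (r : nat) (b : bool) (v : GTV r) : bool :=
  match v with inl (c, _) => c == b | inr _ => true end.

Definition parent_of (r : nat) (u v : GTV r) : bool :=
  match u with
  | inl (b, _) => in_copy b v && ((hidx v)./2 == hidx u)
  | inr _ => false
  end.

Definition gt_adj (r : nat) : rel (GTV r) :=
  fun u v => parent_of u v || parent_of v u.

Definition shortest_path (r : nat) (u v : GTV r) (p : seq (GTV r)) : Prop :=
  [/\ path (@gt_adj r) u p, last u p = v &
      forall q, path (@gt_adj r) u q -> last u q = v -> size p <= size q].

Definition general_position (r : nat) (S : {set GTV r}) : Prop :=
  forall u v, u \in S -> v \in S ->
  forall p, shortest_path u v p ->
  forall x, x \in u :: p -> x \in S -> x = u \/ x = v.

Definition V1 (r : nat) : {set GTV r} :=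
  [set v | if v is inl (b, _) then b else false].

Definition leaf_below (r : nat) (v : GTV r) (j : 'I_(2 ^ r)) : bool :=
  [exists k : 'I_r.+1, (2 ^ r + val j) %/ 2 ^ k == hidx v].

From mathcomp Require Import all_boot.
From mathcomp Require zify.
From Stdlib Require Import Lia Classical IndefiniteDescription.

(* Every edge of GT(r), in
   either copy, halves or doubles the index, so a walk of length s from x to y
   yields a common ancestor reached from x and y in k1 + k2 <= s halvings.
   Hence the path of T^(1) through the lowest common ancestor is a shortest
   path of GT(r), and a general position set S contains none of its inner
   vertices.  For v in S :&: V1 and another w in S :&: V1 this leaves a subtree
   below v free of S: all of T_v if w is not below v, and otherwise the subtree
   of the child of v pointing away from w.  Two of its quasi-leaves form the
   pair of v, and the paths from v down to them avoid S.  Distinct vertices get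
   disjoint pairs: of two vertices above a common quasi-leaf, the lower one
   would lie on the path of the upper one. *)

Set Implicit Arguments. Unset Strict Implicit. Unset Printing Implicit Defensive.

Definition ancestor (a h : nat) : Prop := exists k, h %/ 2 ^ k = a.

Lemma ancestor_refl h : ancestor h h.
Proof. by exists 0; rewrite divn1. Qed.

Lemma ancestor_half h : ancestor (h %/ 2) h.
Proof. by exists 1. Qed.

Lemma ancestor_trans a b h : ancestor a b -> ancestor b h -> ancestor a h.
Proof. by move=> [i <-] [j <-]; exists (j + i); rewrite expnD divnMA. Qed.

Lemma ancestor_leq a h : ancestor a h -> a <= h.
Proof. by move=> [k <-]; apply: leq_div. Qed.

Lemma ancestor_anti a h : ancestor a h -> ancestor h a -> a = h.
Proof. by move=> /ancestor_leq ah /ancestor_leq ha; apply/eqP; rewrite eqn_leq ah. Qed.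

Lemma ancestor_total a b h :
  ancestor a h -> ancestor b h -> ancestor a b \/ ancestor b a.
Proof.
move=> [i <-] [j <-]; case: (leqP i j) => ij; [right; exists (j - i) | left; exists (i - j)];
  by rewrite -divnMA -expnD subnKC // ltnW.
Qed.

Lemma ancestor_strict a h : ancestor a h -> a != h -> ancestor a (h %/ 2).
Proof.
case=> [[|k] <-]; first by rewrite divn1 eqxx.
by exists k; rewrite -divnMA -expnS.
Qed.

Lemma ancestor_root h : 0 < h -> ancestor 1 h.
Proof.
move=> h0; have /andP [lo hi] := trunc_log_bounds (isT : 1 < 2) h0.
exists (trunc_log 2 h); apply/eqP; rewrite eqn_leq divn_gt0 ?expn_gt0 // lo andbT.
by rewrite -ltnS ltn_divLR ?expn_gt0 // -expnS.
Qed.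

Lemma ancestor_child a h : ancestor a h -> a != h -> exists2 c, c %/ 2 = a & ancestor c h.
Proof.
case=> [[|k] <-]; first by rewrite divn1 eqxx.
by exists (h %/ 2 ^ k); [rewrite -divnMA -expnSr | exists k].
Qed.

Lemma child_not_ancestor c : 0 < c %/ 2 -> ~ ancestor c (c %/ 2).
Proof.
move=> c0 /ancestor_leq; rewrite leqNgt ltn_Pdiv //.
by move: c0; rewrite divn_gt0 // => /(leq_trans _)->.
Qed.

Lemma ancestor_below_child n c m h : c %/ 2 = n ->
  ancestor n m -> m != n -> ancestor m h -> ancestor c h -> ancestor c m.
Proof.
move=> cn nm mn mh ch; have [//|mc] := ancestor_total ch mh.
have [/eqP <-|mc'] := boolP (m == c); first exact: ancestor_refl.
by move: mn; rewrite (ancestor_anti (ancestor_strict mc mc') _) ?cn ?eqxx.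
Qed.

Definition sibling (c : nat) : nat := (c./2).*2 + ~~ odd c.

Lemma sibling_half c : sibling c %/ 2 = c %/ 2.
Proof. by rewrite /sibling addnC !divn2 half_bit_double. Qed.

Lemma sibling_neq c : sibling c != c.
Proof.
by rewrite /sibling; have := odd_double_half c; case: (odd c) => /=; lia.
Qed.

Lemma ancestor_half_sibling c : ancestor (c %/ 2) (sibling c).
Proof. by rewrite -sibling_half; apply: ancestor_half. Qed.

Lemma siblings_incomparable c c' :
  c %/ 2 = c' %/ 2 -> 0 < c %/ 2 -> c != c' -> ~ ancestor c c'.
Proof.
move=> cc' c0 neq /ancestor_strict /(_ neq).
by rewrite -cc'; apply: child_not_ancestor.
Qed.

Lemma sibling_ltn c m : 0 < c < 2 ^ m -> sibling c < 2 ^ m.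
Proof.
case: m => [|m]; first by rewrite expn0; lia.
rewrite /sibling expnS; have := odd_double_half c; case: (odd c) => /=; lia.
Qed.

Definition meets_at (h1 h2 k1 k2 : nat) : Prop :=
  h1 %/ 2 ^ k1 = h2 %/ 2 ^ k2 /\ 0 < h1 %/ 2 ^ k1.

Lemma meets_at_min h1 h2 k1 k2 : meets_at h1 h2 k1 k2 ->
  exists a1 a2, meets_at h1 h2 a1 a2 /\
    forall b1 b2, meets_at h1 h2 b1 b2 -> a1 + a2 <= b1 + b2.
Proof.
pose P s := [exists a : 'I_s.+1, (h1 %/ 2 ^ a == h2 %/ 2 ^ (s - a)) && (0 < h1 %/ 2 ^ a)].
have meetsP b1 b2 : meets_at h1 h2 b1 b2 -> P (b1 + b2).
  case=> e pos; have hb : b1 < (b1 + b2).+1 by rewrite ltnS leq_addr.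
  by apply/existsP; exists (Ordinal hb); rewrite /= addKn e eqxx -e.
move=> /meetsP P0; have [s /existsP [[a ha] /andP [/eqP e pos]] smin] := ex_minnP (ex_intro P _ P0).
exists a, (s - a); rewrite subnKC -1?ltnS //; split=> // b1 b2 /meetsP; exact: smin.
Qed.

Lemma gt1_of_pos_div_exp2S h k : 0 < h %/ 2 ^ k.+1 -> 1 < h.
Proof. by rewrite expnSr divnMA divn_gt0 // => /leq_trans; apply; apply: leq_div. Qed.

Section GluedTree.
Variable r : nat.
Implicit Types (S : {set GTV r}) (u v w x y z : GTV r).

Lemma hidx_gt0 v : 0 < hidx v.
Proof. by case: v => [[b k]|j] //=; rewrite addn_gt0 expn_gt0. Qed.

Lemma hidx_ltn v : hidx v < 2 ^ r.+1.
Proof.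
have := expn_gt0 2 r; case: v => [[b k]|j] /=; rewrite expnS.
- by have := ltn_ord k; lia.
- by have := ltn_ord j; lia.
Qed.

Lemma V1_in_copy v : v \in V1 r -> in_copy true v.
Proof. by rewrite inE; case: v => [[[] k]|j]. Qed.

Lemma V1_hidx_ltn v : v \in V1 r -> hidx v < 2 ^ r.
Proof. by rewrite inE; case: v => [[[] k]|j] //= _; have := ltn_ord k; lia. Qed.

Lemma gt_adj_sym u v : gt_adj u v = gt_adj v u.
Proof. by rewrite /gt_adj orbC. Qed.

Lemma gt_adj_hidx u v : gt_adj u v ->
  hidx v %/ 2 = hidx u \/ hidx u %/ 2 = hidx v.
Proof.
case/orP; rewrite /parent_of.
- by case: u => [[b k]|j] // /andP [_ /eqP]; rewrite -divn2; left.
- by case: v => [[b k]|j] // /andP [_ /eqP]; rewrite -divn2; right.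
Qed.

(* The inverse of [hidx] on copy T^(1); junk outside [0 < h < 2 ^ r.+1]. *)
Definition vertex1 (h : nat) : GTV r :=
  if (insub h.-1 : option 'I_((2 ^ r).-1)) is Some k then inl (true, k)
  else inr (Ordinal (ltn_pmod (h - 2 ^ r) (expn_gt0 2 r))).

Lemma in_copy_vertex1 h : in_copy true (vertex1 h).
Proof. by rewrite /vertex1; case: insubP. Qed.

Lemma hidx_vertex1 h : 0 < h < 2 ^ r.+1 -> hidx (vertex1 h) = h.
Proof.
move=> /andP [h0 hr]; rewrite /vertex1; case: insubP => [k _ ek|] /=; first by rewrite ek; lia.
by rewrite -ltnS prednK ?expn_gt0 // => hr'; rewrite modn_small; move: hr; rewrite expnS; lia.
Qed.

Lemma vertex1K v : in_copy true v -> vertex1 (hidx v) = v.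
Proof.
rewrite /vertex1; case: v => [[b k]|j] /=.
- move/eqP=> ->; case: insubP => [k' _ ek|]; last by rewrite ltn_ord.
  by congr (inl (_, _)); apply: val_inj.
- move=> _; case: insubP => [k ks _|_]; first by move: ks; have := expn_gt0 2 r; lia.
  by congr inr; apply: val_inj; rewrite /= addKn modn_small.
Qed.

Lemma hidx_inj_copy u v : in_copy true u -> in_copy true v -> hidx u = hidx v -> u = v.
Proof. by move=> cu cv e; rewrite -(vertex1K cu) -(vertex1K cv) e. Qed.

Lemma vertex1_inner h : 0 < h < 2 ^ r -> exists k, vertex1 h = inl (true, k).
Proof.
move=> /andP [h0 hr]; rewrite /vertex1; case: insubP => [k _ _|]; first by exists k.
by move=> /negP []; lia.
Qed.

Lemma gt_adj_half h : 1 < h < 2 ^ r.+1 -> gt_adj (vertex1 (h %/ 2)) (vertex1 h).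
Proof.
move=> /andP [h1 hr]; have h0 := ltnW h1.
have h2 : 0 < h %/ 2 < 2 ^ r by rewrite divn_gt0 // h1 ltn_divLR // -expnSr.
have [k ek] := vertex1_inner h2.
have ek' : hidx (vertex1 (h %/ 2)) = h %/ 2.
  by case/andP: h2 => p2 q2; apply: hidx_vertex1; rewrite p2 (ltn_trans q2) // ltn_exp2l.
rewrite ek /= in ek'.
by rewrite /gt_adj ek /= in_copy_vertex1 hidx_vertex1 ?h0 // ek' divn2 eqxx.
Qed.

Lemma walk_meets x q : path (@gt_adj r) x q ->
  exists k1 k2, meets_at (hidx x) (hidx (last x q)) k1 k2 /\ k1 + k2 <= size q.
Proof.
elim: q x => [|x1 q IH] x /=.
  by move=> _; exists 0, 0; rewrite /meets_at divn1; split=> //; split=> //; apply: hidx_gt0.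
case/andP=> /gt_adj_hidx x_x1 /IH [k1 [k2 [[e pos] kq]]].
case: x_x1 => [up|down].
- case: k1 e pos kq => [|k1] e pos kq.
    rewrite divn1 in e; exists 0, k2.+1; split; last by rewrite ltnS.
    by rewrite /meets_at divn1 hidx_gt0 expnSr divnMA -e up.
  exists k1, k2; split; last by apply/leqW/ltnW; rewrite -addSn.
  by rewrite /meets_at -up -divnMA -expnS.
- exists k1.+1, k2; split; last by rewrite ltnS.
  by rewrite /meets_at expnS divnMA down.
Qed.

Lemma descend_walk h k : h < 2 ^ r.+1 -> 0 < h %/ 2 ^ k ->
  exists p, [/\ path (@gt_adj r) (vertex1 (h %/ 2 ^ k)) p,
    last (vertex1 (h %/ 2 ^ k)) p = vertex1 h, size p = k &
    forall i, i <= k -> vertex1 (h %/ 2 ^ i) \in vertex1 (h %/ 2 ^ k) :: p].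
Proof.
elim: k h => [|k IH] h hr pos.
  exists [::]; rewrite divn1; split=> // i; rewrite leqn0 => /eqP ->.
  by rewrite divn1 mem_head.
have e : h %/ 2 %/ 2 ^ k = h %/ 2 ^ k.+1 by rewrite -divnMA -expnS.
have [||p [pp pl ps pm]] := IH (h %/ 2).
- exact: leq_ltn_trans (leq_div h 2) hr.
- by rewrite e.
rewrite e in pp pl pm; exists (rcons p (vertex1 h)); split.
- by rewrite rcons_path pp pl gt_adj_half // (gt1_of_pos_div_exp2S pos).
- by rewrite last_rcons.
- by rewrite size_rcons ps.
- rewrite -rcons_cons; case=> [_|i]; first by rewrite divn1 mem_rcons mem_head.
  by rewrite ltnS expnS divnMA mem_rcons inE => /pm ->; rewrite orbT.
Qed.

Lemma tree_walk h1 h2 k1 k2 : h1 < 2 ^ r.+1 -> h2 < 2 ^ r.+1 -> meets_at h1 h2 k1 k2 ->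
  exists p, [/\ path (@gt_adj r) (vertex1 h1) p, last (vertex1 h1) p = vertex1 h2,
    size p = k1 + k2 & forall i, i <= k2 -> vertex1 (h2 %/ 2 ^ i) \in vertex1 h1 :: p].
Proof.
elim: k1 h1 => [|k1 IH] h1 h1r h2r [e pos].
  by rewrite divn1 in e pos; rewrite e add0n; apply: descend_walk; rewrite -?e.
have [||p [pp pl ps pm]] := IH (h1 %/ 2) _ h2r.
- exact: leq_ltn_trans (leq_div h1 2) h1r.
- by split; rewrite -divnMA -expnS.
exists (vertex1 (h1 %/ 2) :: p); split=> /=.
- by rewrite pp andbT gt_adj_sym gt_adj_half // (gt1_of_pos_div_exp2S pos).
- exact: pl.
- by rewrite ps.
- by move=> i /pm mem; rewrite inE mem orbT.
Qed.

Lemma general_position_ancestor S x y z : general_position S ->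
  x \in S -> y \in S -> z \in S -> in_copy true x -> in_copy true y -> in_copy true z ->
  ancestor (hidx z) (hidx y) ->
  (forall m, 0 < m -> ancestor m (hidx x) -> ancestor m (hidx y) -> ancestor m (hidx z)) ->
  z = x \/ z = y.
Proof.
move=> GP xS yS zS cx cy cz [i zi] between.
have [[k1 e1] [k2 e2]] := (ancestor_root (hidx_gt0 x), ancestor_root (hidx_gt0 y)).
have root_meet : meets_at (hidx x) (hidx y) k1 k2 by rewrite /meets_at e1 e2.
have [a1 [a2 [[e pos] amin]]] := meets_at_min root_meet.
have [i' ia2 zi'] : exists2 i', i' <= a2 & hidx y %/ 2 ^ i' = hidx z.
  case: (leqP i a2) => ia2; first by exists i.
  exists a2 => //; apply: ancestor_anti.
    by rewrite -e; apply: between; [|exists a1|exists a2].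
  by exists (i - a2); rewrite -zi -divnMA -expnD subnKC // ltnW.
have [p [pp pl ps pm]] := tree_walk (hidx_ltn x) (hidx_ltn y) (conj e pos).
rewrite !vertex1K // in pp pl pm.
apply: (GP x y xS yS p _ z _ zS).
- split=> // q qp ql; have [b1 [b2 [mb bq]]] := walk_meets qp.
  by rewrite ps; apply: leq_trans (amin _ _ _) bq; rewrite -ql.
- by rewrite -(vertex1K cz) -zi' pm.
Qed.

Lemma leaf_belowP v (j : 'I_(2 ^ r)) : leaf_below v j <-> ancestor (hidx v) (2 ^ r + j).
Proof.
split=> [/existsP [k /eqP e] | [k e]]; first by exists k.
have kr : k < r.+1.
  rewrite -(ltn_exp2l _ _ (isT : 1 < 2)); apply: leq_ltn_trans (hidx_ltn (inr j)).
  by rewrite /= -divn_gt0 ?expn_gt0 // e hidx_gt0.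
by apply/existsP; exists (Ordinal kr); rewrite e.
Qed.

Lemma two_leaves_below q : 0 < q < 2 ^ r ->
  exists j1 j2 : 'I_(2 ^ r), [/\ j1 != j2, ancestor q (2 ^ r + j1) & ancestor q (2 ^ r + j2)].
Proof.
move=> /andP [q0 qr]; have /andP [lo hi] := trunc_log_bounds (isT : 1 < 2) q0.
set d := trunc_log 2 q in lo hi; set X := 2 ^ (r - d).
have dr : d < r by rewrite -(ltn_exp2l _ _ (isT : 1 < 2)); apply: leq_ltn_trans lo qr.
have Er : 2 ^ r = 2 ^ d * X by rewrite -expnD subnKC // ltnW.
have X2 : 2 <= X by rewrite -{1}(expn1 2) leq_exp2l // subn_gt0.
have [L1 L2] : q * X - 2 ^ r < 2 ^ r /\ q * X + 1 - 2 ^ r < 2 ^ r.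
  by move: lo hi; rewrite expnS Er; move: (2 ^ d) X2 => Y; nia.
have [K1 K2] : 2 ^ r + (q * X - 2 ^ r) = q * X /\ 2 ^ r + (q * X + 1 - 2 ^ r) = q * X + 1.
  have : 2 ^ r <= q * X by rewrite Er leq_mul2r lo orbT.
  lia.
exists (Ordinal L1), (Ordinal L2); rewrite /= K1 K2; split.
- by apply/eqP => -[]; lia.
- by exists (r - d); rewrite mulnK ?expn_gt0.
- by exists (r - d); rewrite divnMDl ?divn_small ?addn0 ?expn_gt0.
Qed.

Section ClearPaths.
Variable S : {set GTV r}.

Definition clear_path v (L : nat) : Prop :=
  forall y, y \in S -> in_copy true y -> y != v ->
    ancestor (hidx v) (hidx y) -> ancestor (hidx y) L -> False.

Definition good_pair v (p : 'I_(2 ^ r) * 'I_(2 ^ r)) : Prop :=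
  [/\ p.1 != p.2, leaf_below v p.1, leaf_below v p.2,
      (inr p.1 : GTV r) \notin S & (inr p.2 : GTV r) \notin S] /\
  clear_path v (2 ^ r + p.1) /\ clear_path v (2 ^ r + p.2).

Lemma good_pair_below v q : v \in V1 r -> 0 < q < 2 ^ r -> ancestor (hidx v) q ->
  (forall L, ancestor q L -> clear_path v L) -> exists p, good_pair v p.
Proof.
move=> v1 qr vq clear_q.
have leaf_ok (j : 'I_(2 ^ r)) : ancestor q (2 ^ r + j) ->
    [/\ leaf_below v j, (inr j : GTV r) \notin S & clear_path v (2 ^ r + j)].
  move=> qj; have cj := clear_q _ qj; split=> //.
    by apply/leaf_belowP; apply: ancestor_trans qj.
  apply/negP => jS; apply: (cj (inr j)) => //; last exact: ancestor_refl.
  - by apply: contraTneq v1 => <-; rewrite inE.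
  - exact: ancestor_trans qj.
have [j1 [j2 [ne q1 q2]]] := two_leaves_below qr.
have [l1 n1 c1] := leaf_ok _ q1; have [l2 n2 c2] := leaf_ok _ q2.
by exists (j1, j2).
Qed.

Lemma clear_path_unique v w L : v \in S -> w \in S -> in_copy true v -> in_copy true w ->
  v != w -> ancestor (hidx v) L -> ancestor (hidx w) L -> clear_path v L -> clear_path w L ->
  False.
Proof.
move=> vS wS cv cw vw vL wL vclear wclear.
case: (ancestor_total vL wL) => [vw' | wv'].
- by apply: (vclear w) => //; rewrite eq_sym.
- exact: (wclear v).
Qed.

Lemma good_pair_disjoint v w p p' : v \in S :&: V1 r -> w \in S :&: V1 r -> v != w ->
  good_pair v p -> good_pair w p' -> [disjoint [:: p.1; p.2] & [:: p'.1; p'.2]].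
Proof.
move=> /setIP [vS /V1_in_copy cv] /setIP [wS /V1_in_copy cw] vw.
move=> [[_ lv1 lv2 _ _] [cv1 cv2]] [[_ lw1 lw2 _ _] [cw1 cw2]].
have leaf_neq a b : leaf_below v a -> clear_path v (2 ^ r + a) ->
    leaf_below w b -> clear_path w (2 ^ r + b) -> a != b.
  move=> /leaf_belowP va ca /leaf_belowP wb cb; apply/eqP => ab; subst b.
  exact: (clear_path_unique vS wS cv cw vw va wb ca cb).
by rewrite disjoint_has /= !inE !negb_or !leaf_neq.
Qed.

Hypothesis GP : general_position S.
Variables v w : GTV r.
Hypotheses (vM : v \in S :&: V1 r) (wM : w \in S :&: V1 r) (wv : w != v).

Lemma clear_off_branch : ~ ancestor (hidx v) (hidx w) -> forall L, clear_path v L.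
Proof.
have [[vS /V1_in_copy cv] [wS /V1_in_copy cw]] := (setIP vM, setIP wM).
move=> nvw L y yS cy yv vy _.
have [m m0 mw my | vw | vy'] := general_position_ancestor GP wS yS vS cw cy cv vy.
- have [//|vm] := ancestor_total my vy.
  by case: nvw; apply: ancestor_trans vm mw.
- by move: wv; rewrite vw eqxx.
- by move: yv; rewrite vy' eqxx.
Qed.

Lemma clear_sibling_subtree c : c %/ 2 = hidx v -> ancestor c (hidx w) ->
  forall L, ancestor (sibling c) L -> clear_path v L.
Proof.
have [[vS /V1_in_copy cv] [wS /V1_in_copy cw]] := (setIP vM, setIP wM).
move=> c_half c_w; have c0 : 0 < c %/ 2 by rewrite c_half hidx_gt0.
have s0 : 0 < sibling c %/ 2 by rewrite sibling_half.
have sc : sibling c %/ 2 = hidx v by rewrite sibling_half.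
have sibling_free y : y \in S -> in_copy true y -> ~ ancestor (sibling c) (hidx y).
  move=> yS cy sy.
  have vy : ancestor (hidx v) (hidx y).
    by rewrite -c_half; apply: ancestor_trans (ancestor_half_sibling c) sy.
  (* [v] would lie on the path from [w], below [c], to [y], below [sibling c]. *)
  have [m m0 mw my | vw | vy'] := general_position_ancestor GP wS yS vS cw cy cv vy.
  - have [//|vm] := ancestor_total my vy.
    have [/eqP -> | mv] := boolP (m == hidx v); first exact: ancestor_refl.
    have cm := ancestor_below_child c_half vm mv mw c_w.
    have sm := ancestor_below_child sc vm mv my sy.
    exfalso; have [] := ancestor_total cm sm; apply: siblings_incomparable;
      rewrite ?sibling_half //.
    + by rewrite eq_sym sibling_neq.
    + exact: sibling_neq.
  - by apply: (child_not_ancestor c0); rewrite c_half vw.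
  - by apply: (child_not_ancestor s0); rewrite sc vy'.
move=> L sL y yS cy yv vy yL.
have yv' : hidx y != hidx v by apply: contra yv => /eqP /(hidx_inj_copy cy cv) ->.
exact: (sibling_free y yS cy (ancestor_below_child sc vy yv' yL sL)).
Qed.

Lemma exists_good_pair : exists p, good_pair v p.
Proof.
have [[_ v1] [_ w1]] := (setIP vM, setIP wM).
have [vw | nvw] := classic (ancestor (hidx v) (hidx w)); last first.
  apply: (@good_pair_below v (hidx v) v1); rewrite ?hidx_gt0 ?V1_hidx_ltn //.
    exact: ancestor_refl.
  by move=> L _; apply: clear_off_branch.
have vw' : hidx v != hidx w.
  apply: contra wv => /eqP e; apply/eqP/esym.
  exact: hidx_inj_copy (V1_in_copy v1) (V1_in_copy w1) e.
have [c c_half c_w] := ancestor_child vw vw'.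
apply: (@good_pair_below v (sibling c) v1); last exact: clear_sibling_subtree.
- have c2 : 1 < c by rewrite -divn_gt0 // c_half hidx_gt0.
  have s2 : 1 < sibling c by rewrite -divn_gt0 // sibling_half c_half hidx_gt0.
  rewrite (ltnW s2) sibling_ltn // (ltnW c2).
  exact: leq_ltn_trans (ancestor_leq c_w) (V1_hidx_ltn w1).
- by rewrite -c_half; apply: ancestor_half_sibling.
Qed.

End ClearPaths.
End GluedTree.

Theorem mainTheorem6 (r : nat) (S : {set GTV r}) :
  2 <= r -> general_position S -> 2 <= #|S :&: V1 r| ->
  exists f : GTV r -> 'I_(2 ^ r) * 'I_(2 ^ r),
    (forall v, v \in S :&: V1 r ->
       [/\ (f v).1 != (f v).2,
           leaf_below v (f v).1, leaf_below v (f v).2,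
           (inr (f v).1 : GTV r) \notin S & (inr (f v).2 : GTV r) \notin S]) /\
    (forall v w, v \in S :&: V1 r -> w \in S :&: V1 r -> v != w ->
       [disjoint [:: (f v).1; (f v).2] & [:: (f w).1; (f w).2]]).
Proof.
move=> _ GP /card_gt1P [x [y [xM yM xy]]].
have good v : exists p, v \in S :&: V1 r -> good_pair S v p.
  have leaf0 : 'I_(2 ^ r) by exists 0; rewrite expn_gt0.
  have [vM|] := boolP (v \in S :&: V1 r); last by exists (leaf0, leaf0).
  have [w wM wv] : exists2 w, w \in S :&: V1 r & w != v.
    by case: (eqVneq x v) => [xv | ?]; [exists y; rewrite // -xv eq_sym | exists x].
  by have [p] := exists_good_pair GP vM wM wv; exists p.
have [f fgood] := functional_choice _ good.
exists f; split=> [v /fgood [] // | v w vM wM vw].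
exact: good_pair_disjoint vM wM vw (fgood v vM) (fgood w wM).
Qed.
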